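(* On the open set $\Omega\subset\mathbb{R}^3$ where $u,v,w$ are pairwise distinct, consider the system $$u'=\frac{1}{u-v}+\frac{1}{u-w},\quad v'=\frac{1}{v-w}+\frac{1}{v-u},\quad w'=\frac{1}{w-u}+\frac{1}{w-v},$$ written $\mathbf{u}'=\mathbf{U}(\mathbf{u})$ with $\mathbf{u}=(u,v,w)$. Define $$P_{f1}(\mathbf{u})=\frac{-1}{\sqrt6\,(u-v)(v-w)(w-u)}\begin{pmatrix}0&1&-1\\-1&0&1\\1&-1&0\end{pmatrix},\qquad H_f(\mathbf{u})=\frac{1}{6\sqrt6}(u+v-2w)\big[(u+v-2w)^2-9(u-v)^2\big],$$ $$P_{f2}(\mathbf{u})=\frac16\Big[\frac{u-v}{(v-w)(w-u)}+\frac{2}{u-v}\Big]\begin{pmatrix}0&2&1\\-2&0&-1\\-1&1&0\end{pmatrix}+\frac12\Big[\frac1{v-w}-\frac1{w-u}\Big]\begin{pmatrix}0&0&1\\0&0&1\\-1&-1&0\end{pmatrix},$$ and $H^{(1)}(\mathbf{u})=u+v+w$. Then $P_{f1}$ and $P_{f2}$ are compatible Poisson matrices on $\Omega$, and the system is bi-Hamiltonian: $$\mathbf{u}'=P_{f1}(\mathbf{u})\nabla H_f(\mathbf{u})=P_{f2}(\mathbf{u})\nabla H^{(1)}(\mathbf{u}).$$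
   Context: A smooth skew-symmetric matrix-valued function $P$ on an open subset of $\mathbb{R}^3$ is a Poisson matrix if the bracket $\{f,g\}=(\nabla f)^{T}P\,\nabla g$ satisfies the Jacobi identity; two Poisson matrices are compatible if every linear combination of them is again a Poisson matrix. *)

From Stdlib Require Import Reals List.
From Coquelicot Require Import Coquelicot.
Open Scope R_scope.

Definition pt : Type := (R * R * R)%type.

Inductive ix : Type := X1 | X2 | X3.

Definition sum3 (F : ix -> R) : R := F X1 + F X2 + F X3.

Definition coord (i : ix) (p : pt) : R :=
  match i with X1 => fst (fst p) | X2 => snd (fst p) | X3 => snd p end.

Definition upd (i : ix) (p : pt) (t : R) : pt :=
  match i with
  | X1 => ((t, snd (fst p)), snd p)
  | X2 => ((fst (fst p), t), snd p)
  | X3 => ((fst (fst p), snd (fst p)), t)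
  end.

Definition pd (i : ix) (f : pt -> R) (p : pt) : R :=
  Derive (fun t => f (upd i p t)) (coord i p).

Definition iterD (s : list ix) (f : pt -> R) : pt -> R :=
  fold_right pd f s.

Definition smooth_on (U : pt -> Prop) (f : pt -> R) : Prop :=
  forall (s : list ix) (p : pt), U p ->
    continuous (iterD s f) p /\
    (forall i, ex_derive (fun t => iterD s f (upd i p t)) (coord i p)).

Definition mxfun : Type := pt -> ix -> ix -> R.

Definition bracket (P : mxfun) (f g : pt -> R) : pt -> R :=
  fun p => sum3 (fun i => sum3 (fun j => pd i f p * P p i j * pd j g p)).

Definition Poisson_on (U : pt -> Prop) (P : mxfun) : Prop :=
  (forall i j, smooth_on U (fun p => P p i j)) /\
  (forall p, U p -> forall i j, P p i j = - P p j i) /\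
  (forall f g h : pt -> R, smooth_on U f -> smooth_on U g -> smooth_on U h ->
     forall p, U p ->
       bracket P f (bracket P g h) p + bracket P g (bracket P h f) p
       + bracket P h (bracket P f g) p = 0).

Definition compatible_on (U : pt -> Prop) (P Q : mxfun) : Prop :=
  forall a b : R, Poisson_on U (fun p i j => a * P p i j + b * Q p i j).

Definition Omega (p : pt) : Prop :=
  let u := coord X1 p in let v := coord X2 p in let w := coord X3 p in
  u <> v /\ v <> w /\ w <> u.

Definition Ufield (p : pt) (i : ix) : R :=
  let u := coord X1 p in let v := coord X2 p in let w := coord X3 p in
  match i with
  | X1 => 1 / (u - v) + 1 / (u - w)
  | X2 => 1 / (v - w) + 1 / (v - u)
  | X3 => 1 / (w - u) + 1 / (w - v)
  end.

Definition M1 (i j : ix) : R :=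
  match i, j with
  | X1, X1 => 0 | X1, X2 => 1 | X1, X3 => -1
  | X2, X1 => -1 | X2, X2 => 0 | X2, X3 => 1
  | X3, X1 => 1 | X3, X2 => -1 | X3, X3 => 0
  end.

Definition M2 (i j : ix) : R :=
  match i, j with
  | X1, X1 => 0 | X1, X2 => 2 | X1, X3 => 1
  | X2, X1 => -2 | X2, X2 => 0 | X2, X3 => -1
  | X3, X1 => -1 | X3, X2 => 1 | X3, X3 => 0
  end.

Definition M3 (i j : ix) : R :=
  match i, j with
  | X1, X1 => 0 | X1, X2 => 0 | X1, X3 => 1
  | X2, X1 => 0 | X2, X2 => 0 | X2, X3 => 1
  | X3, X1 => -1 | X3, X2 => -1 | X3, X3 => 0
  end.

Definition Pf1 : mxfun := fun p i j =>
  let u := coord X1 p in let v := coord X2 p in let w := coord X3 p in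
  (-1 / (sqrt 6 * (u - v) * (v - w) * (w - u))) * M1 i j.

Definition Pf2 : mxfun := fun p i j =>
  let u := coord X1 p in let v := coord X2 p in let w := coord X3 p in
  (1 / 6) * ((u - v) / ((v - w) * (w - u)) + 2 / (u - v)) * M2 i j
  + (1 / 2) * (1 / (v - w) - 1 / (w - u)) * M3 i j.

Definition Hf (p : pt) : R :=
  let u := coord X1 p in let v := coord X2 p in let w := coord X3 p in
  1 / (6 * sqrt 6) * (u + v - 2 * w) * ((u + v - 2 * w) ^ 2 - 9 * (u - v) ^ 2).

Definition H1 (p : pt) : R := coord X1 p + coord X2 p + coord X3 p.

Definition PgradH (P : mxfun) (H : pt -> R) (p : pt) (i : ix) : R :=
  sum3 (fun j => P p i j * pd j H p).

From Stdlib Require Import Reals Lra List FunctionalExtensionality.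
From Coquelicot Require Import Coquelicot.
Open Scope R_scope.

(* The entries of a Pf1 + b Pf2 and the Hamiltonians are rational functions whose only
   poles lie on the diagonals u = v, v = w, w = u.  These form a ring closed under
   partial differentiation, so they are smooth on Omega and all their derivatives can
   be computed symbolically.  For a smooth skew matrix P on an open set, Schwarz's
   theorem reduces the Jacobi identity for arbitrary f, g, h to the vanishing of the
   tensor  sum_l (P_il d_l P_jk + P_jl d_l P_ki + P_kl d_l P_ij);  for every member of
   the pencil this, like the two Hamiltonian identities, is an identity of rational
   functions. *)

Lemma coord_upd_same i p t : coord i (upd i p t) = t.
Proof. destruct i, p as [[u v] w]; reflexivity. Qed.

Lemma coord_upd_other i j p t : i <> j -> coord j (upd i p t) = coord j p.
Proof. destruct i, j, p as [[u v] w]; simpl; intros; try reflexivity; congruence. Qed.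

Lemma upd_coord i p : upd i p (coord i p) = p.
Proof. destruct i, p as [[u v] w]; reflexivity. Qed.

Lemma upd_upd_same i p s t : upd i (upd i p s) t = upd i p t.
Proof. destruct i, p as [[u v] w]; reflexivity. Qed.

Lemma upd_comm i j p s t : i <> j -> upd i (upd j p t) s = upd j (upd i p s) t.
Proof. destruct i, j, p as [[u v] w]; simpl; intros; try reflexivity; congruence. Qed.

Lemma ball_pt (p q : pt) (e : R) : ball p e q <->
  Rabs (coord X1 q - coord X1 p) < e /\ Rabs (coord X2 q - coord X2 p) < e /\
  Rabs (coord X3 q - coord X3 p) < e.
Proof.
  destruct p as [[u v] w], q as [[a b] c].
  change ((ball u e a /\ ball v e b) /\ ball w e c <->
    Rabs (a - u) < e /\ Rabs (b - v) < e /\ Rabs (c - w) < e); tauto.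
Qed.

Lemma ball_upd2 (p : pt) (e : posreal) i j s t :
  Rabs (s - coord i p) < e -> Rabs (t - coord j p) < e -> ball p e (upd j (upd i p s) t).
Proof.
  intros Hs Ht; apply ball_pt; pose proof (cond_pos e).
  destruct i, j, p as [[u v] w]; simpl in *; rewrite ?Rminus_diag, ?Rabs_R0; auto.
Qed.

Lemma ball_upd (p : pt) (e : posreal) i t : Rabs (t - coord i p) < e -> ball p e (upd i p t).
Proof.
  intros Ht; rewrite <- (upd_upd_same i p (coord i p)).
  apply ball_upd2; auto; rewrite Rminus_diag, Rabs_R0; apply cond_pos.
Qed.

Lemma open_line (U : pt -> Prop) p i : open U -> U p ->
  locally (coord i p) (fun t => U (upd i p t)).
Proof. intros HU Hp; destruct (HU p Hp) as [d Hd]; exists d; intros t Ht; apply Hd, ball_upd, Ht. Qed.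

Lemma ix_eq_dec (i j : ix) : {i = j} + {i <> j}.
Proof. decide equality. Defined.

Lemma is_derive_mult3 (a b c : R -> R) x da db dc :
  is_derive a x da -> is_derive b x db -> is_derive c x dc ->
  is_derive (fun t => a t * b t * c t) x (da * b x * c x + a x * db * c x + a x * b x * dc).
Proof.
  intros Ha Hb Hc.
  replace (da * b x * c x + a x * db * c x + a x * b x * dc)
    with ((da * b x + a x * db) * c x + (a x * b x) * dc) by ring.
  apply (is_derive_mult (K := R_AbsRing) (fun t => a t * b t) c);
    [apply (is_derive_mult (K := R_AbsRing) a b) | | ]; auto; intros; apply Rmult_comm.
Qed.

Lemma is_derive_sum3 (F : ix -> R -> R) (dF : ix -> R) x :
  (forall k, is_derive (F k) x (dF k)) -> is_derive (fun t => sum3 (fun k => F k t)) x (sum3 dF).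
Proof.
  intros H; unfold sum3.
  apply (is_derive_plus (fun t => F X1 t + F X2 t) (F X3));
    [apply (is_derive_plus (F X1) (F X2)) |]; auto.
Qed.

(** * Smooth functions and the Jacobi identity *)

Lemma pd_upd2_fst g p i j s t : i <> j ->
  pd i g (upd j (upd i p s) t) = Derive (fun z => g (upd j (upd i p z) t)) s.
Proof.
  intros Hij; unfold pd; rewrite coord_upd_other, coord_upd_same by auto.
  apply Derive_ext; intros z; rewrite upd_comm, upd_upd_same by auto; reflexivity.
Qed.

Lemma pd_upd2_snd g p i j s t :
  pd j g (upd j (upd i p s) t) = Derive (fun z => g (upd j (upd i p s) z)) t.
Proof.
  unfold pd; rewrite coord_upd_same.
  apply Derive_ext; intros z; rewrite upd_upd_same; reflexivity.
Qed.

Section SmoothCalculus.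

Variable U : pt -> Prop.

Lemma smooth_on_pd F k : smooth_on U F -> smooth_on U (pd k F).
Proof.
  intros HF s p Hp.
  replace (iterD s (pd k F)) with (iterD (s ++ k :: nil) F)
    by (unfold iterD; rewrite fold_right_app; reflexivity).
  apply HF, Hp.
Qed.

Lemma is_derive_pd F j p : smooth_on U F -> U p ->
  is_derive (fun t => F (upd j p t)) (coord j p) (pd j F p).
Proof. intros HF Hp; apply Derive_correct, (proj2 (HF nil p Hp) j). Qed.

Lemma ex_derive_upd2_fst g p i j s t : i <> j -> smooth_on U g -> U (upd j (upd i p s) t) ->
  ex_derive (fun z => g (upd j (upd i p z) t)) s.
Proof.
  intros Hij Hg Hq; generalize (proj2 (Hg nil _ Hq) i).
  rewrite coord_upd_other, coord_upd_same by auto; apply ex_derive_ext; intros z.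
  rewrite upd_comm, upd_upd_same by auto; reflexivity.
Qed.

Lemma ex_derive_upd2_snd g p i j s t : smooth_on U g -> U (upd j (upd i p s) t) ->
  ex_derive (fun z => g (upd j (upd i p s) z)) t.
Proof.
  intros Hg Hq; generalize (proj2 (Hg nil _ Hq) j).
  rewrite coord_upd_same; apply ex_derive_ext; intros z; rewrite upd_upd_same; reflexivity.
Qed.

Lemma continuity_2d_upd2 (g : pt -> R) p i j : continuous g p ->
  continuity_2d_pt (fun s t => g (upd j (upd i p s) t)) (coord i p) (coord j p).
Proof.
  intros Hg eps.
  destruct (Hg _ (locally_ball (g p) eps)) as [d Hd].
  exists d; intros s t Hs Ht.
  rewrite 2!upd_coord; apply Hd, ball_upd2; auto.
Qed.

Lemma pd_bracket (P : mxfun) g h p j :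
  (forall k l, smooth_on U (fun q => P q k l)) -> smooth_on U g -> smooth_on U h -> U p ->
  pd j (bracket P g h) p = sum3 (fun k => sum3 (fun l =>
     pd j (pd k g) p * P p k l * pd l h p + pd k g p * pd j (fun q => P q k l) p * pd l h p
     + pd k g p * P p k l * pd j (pd l h) p)).
Proof.
  intros HP Hg Hh Hp; unfold pd at 1; apply is_derive_unique; unfold bracket.
  apply (is_derive_sum3 (fun k t => sum3 (fun l =>
    pd k g (upd j p t) * P (upd j p t) k l * pd l h (upd j p t)))); intros k.
  apply (is_derive_sum3 (fun l t =>
    pd k g (upd j p t) * P (upd j p t) k l * pd l h (upd j p t))); intros l.
  pose proof (is_derive_mult3 (fun t => pd k g (upd j p t)) (fun t => P (upd j p t) k l)
    (fun t => pd l h (upd j p t)) (coord j p) _ _ _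
    (is_derive_pd _ j p (smooth_on_pd g k Hg) Hp) (is_derive_pd _ j p (HP k l) Hp)
    (is_derive_pd _ j p (smooth_on_pd h l Hh) Hp)) as Hd.
  cbv beta in Hd; rewrite upd_coord in Hd; exact Hd.
Qed.

Hypothesis U_open : open U.

Lemma pd_comm f p i j : smooth_on U f -> U p -> pd i (pd j f) p = pd j (pd i f) p.
Proof.
  intros Hf Hp; destruct (ix_eq_dec i j) as [<-|Hij]; [reflexivity|].
  set (F := fun s t => f (upd j (upd i p s) t)).
  assert (E : p = upd j (upd i p (coord i p)) (coord j p)) by (rewrite 2!upd_coord; reflexivity).
  rewrite E at 1 2; rewrite pd_upd2_fst, pd_upd2_snd by auto.
  transitivity (Derive (fun z => Derive (fun t => F z t) (coord j p)) (coord i p)).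
  { apply Derive_ext; intros z; apply pd_upd2_snd. }
  transitivity (Derive (fun t => Derive (fun z => F z t) (coord i p)) (coord j p)).
  2:{ apply Derive_ext; intros t; symmetry; apply pd_upd2_fst, Hij. }
  apply Schwarz.
  - destruct (U_open p Hp) as [d Hd]; exists d; intros s t Hs Ht.
    assert (Hq : U (upd j (upd i p s) t)) by (apply Hd, ball_upd2; auto).
    repeat split.
    + apply ex_derive_upd2_fst; auto.
    + apply ex_derive_upd2_snd; auto.
    + generalize (ex_derive_upd2_fst _ _ _ _ _ _ Hij (smooth_on_pd f j Hf) Hq).
      apply ex_derive_ext; intros z; apply pd_upd2_snd.
    + generalize (ex_derive_upd2_snd _ _ _ _ _ _ (smooth_on_pd f i Hf) Hq).
      apply ex_derive_ext; intros z; apply pd_upd2_fst, Hij.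
  - generalize (continuity_2d_upd2 _ p i j (proj1 (Hf (i :: j :: nil) p Hp))).
    apply continuity_2d_pt_ext; intros s t; simpl; rewrite pd_upd2_fst by auto.
    apply Derive_ext; intros z; apply pd_upd2_snd.
  - generalize (continuity_2d_upd2 _ p i j (proj1 (Hf (j :: i :: nil) p Hp))).
    apply continuity_2d_pt_ext; intros s t; simpl; rewrite pd_upd2_snd.
    apply Derive_ext; intros z; apply pd_upd2_fst, Hij.
Qed.

Definition jacobi_tensor (P : mxfun) p i j k := sum3 (fun l =>
  P p i l * pd l (fun q => P q j k) p + P p j l * pd l (fun q => P q k i) p
  + P p k l * pd l (fun q => P q i j) p).

(* Expanding the cyclic sum, the second derivatives of f, g, h cancel in pairs by
   skew-symmetry and pd_comm; only first derivatives paired with jacobi_tensor survive. *)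
Lemma Poisson_on_jacobi_tensor (P : mxfun) :
  (forall i j, smooth_on U (fun p => P p i j)) ->
  (forall p, U p -> forall i j, P p i j = - P p j i) ->
  (forall p, U p -> forall i j k, jacobi_tensor P p i j k = 0) ->
  Poisson_on U P.
Proof.
  intros HP Hskew HT; split; [|split]; auto.
  intros f g h Hf Hg Hh p Hp.
  transitivity (sum3 (fun i => sum3 (fun j => sum3 (fun k =>
     pd i f p * pd j g p * pd k h p * jacobi_tensor P p i j k)))).
  2:{ unfold sum3; rewrite !(HT p Hp); ring. }
  unfold bracket at 1 3 5; cbv beta; unfold sum3.
  rewrite !(fun j => pd_bracket P g h p j HP Hg Hh Hp),
          !(fun j => pd_bracket P h f p j HP Hh Hf Hp),
          !(fun j => pd_bracket P f g p j HP Hf Hg Hp).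
  unfold jacobi_tensor, sum3.
  rewrite !(pd_comm _ _ X2 X1), !(pd_comm _ _ X3 X1), !(pd_comm _ _ X3 X2) by auto.
  assert (Hdiag : forall i, P p i i = 0) by (intros i; pose proof (Hskew p Hp i i); lra).
  rewrite (Hskew p Hp X2 X1), (Hskew p Hp X3 X1), (Hskew p Hp X3 X2), !Hdiag.
  ring.
Qed.

End SmoothCalculus.

(** * Rational functions with poles on the diagonals *)

Lemma continuous_coord i (p : pt) : continuous (coord i) p.
Proof.
  destruct p as [[u v] w], i; unfold coord.
  - apply (continuous_comp (fun p : pt => fst p) fst); apply continuous_fst.
  - apply (continuous_comp (fun p : pt => fst p) snd); [apply continuous_fst | apply continuous_snd].
  - apply continuous_snd.
Qed.

Lemma open_coord_neq i j : open (fun p => coord i p - coord j p <> 0).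
Proof.
  apply (open_comp (fun p => coord i p - coord j p) (fun x => x <> 0)); [|apply open_neq].
  intros p _; apply (continuous_minus (coord i) (coord j)); apply continuous_coord.
Qed.

Lemma open_Omega : open Omega.
Proof.
  generalize (open_and _ _ (open_coord_neq X1 X2)
    (open_and _ _ (open_coord_neq X2 X3) (open_coord_neq X3 X1))).
  apply open_ext; intros p; unfold Omega; split; intros [? [? ?]]; repeat split; lra.
Qed.

Lemma Omega_diffs u v w : Omega ((u, v), w) ->
  u - v <> 0 /\ v - w <> 0 /\ w - u <> 0 /\ u - w <> 0 /\ v - u <> 0 /\ w - v <> 0.
Proof. unfold Omega; simpl; intros [? [? ?]]; repeat split; lra. Qed.

Inductive diag := D12 | D23 | D31.

Definition diag_fst (d : diag) : ix := match d with D12 => X1 | D23 => X2 | D31 => X3 end.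
Definition diag_snd (d : diag) : ix := match d with D12 => X2 | D23 => X3 | D31 => X1 end.

Lemma Omega_diag_neq p d : Omega p -> coord (diag_fst d) p - coord (diag_snd d) p <> 0.
Proof. destruct p as [[u v] w]; unfold Omega; simpl; intros [? [? ?]]; destruct d; simpl; lra. Qed.

(* Syntax of the subring of functions on Omega generated by the coordinates, the
   constants, and the inverses of the three differences; it is closed under pd. *)
Inductive rexpr :=
  | RCst (c : R)
  | RVar (i : ix)
  | RAdd (a b : rexpr)
  | RMul (a b : rexpr)
  | RInvDiff (d : diag).

Fixpoint reval (e : rexpr) (p : pt) : R :=
  match e with
  | RCst c => c
  | RVar i => coord i p
  | RAdd a b => reval a p + reval b p
  | RMul a b => reval a p * reval b p
  | RInvDiff d => / (coord (diag_fst d) p - coord (diag_snd d) p)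
  end.

Definition kron (i k : ix) : R :=
  match i, k with X1, X1 | X2, X2 | X3, X3 => 1 | _, _ => 0 end.

Fixpoint rderiv (k : ix) (e : rexpr) : rexpr :=
  match e with
  | RCst _ => RCst 0
  | RVar i => RCst (kron i k)
  | RAdd a b => RAdd (rderiv k a) (rderiv k b)
  | RMul a b => RAdd (RMul (rderiv k a) b) (RMul a (rderiv k b))
  | RInvDiff d =>
      RMul (RCst (kron (diag_snd d) k - kron (diag_fst d) k)) (RMul (RInvDiff d) (RInvDiff d))
  end.

Lemma is_derive_coord i k p : is_derive (fun t => coord i (upd k p t)) (coord k p) (kron i k).
Proof.
  destruct i, k, p as [[u v] w]; simpl;
    first [ exact (is_derive_id (K := R_AbsRing) _)
          | exact (is_derive_const (K := R_AbsRing) (V := R_NormedModule) _ _) ].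
Qed.

Lemma is_derive_reval e k p : Omega p ->
  is_derive (fun t => reval e (upd k p t)) (coord k p) (reval (rderiv k e) p).
Proof.
  intros Hp; induction e as [c|i|a IHa b IHb|a IHa b IHb|d]; simpl.
  - exact (is_derive_const (K := R_AbsRing) (V := R_NormedModule) _ _).
  - apply is_derive_coord.
  - apply (is_derive_plus (fun t => reval a (upd k p t)) (fun t => reval b (upd k p t))); auto.
  - pose proof (is_derive_mult (fun t => reval a (upd k p t)) (fun t => reval b (upd k p t))
      _ _ _ IHa IHb Rmult_comm) as Hd.
    cbv beta in Hd; rewrite upd_coord in Hd; exact Hd.
  - pose proof (Omega_diag_neq p d Hp) as Hd.
    pose proof (is_derive_inv _ _ _
      (is_derive_minus (fun t => coord (diag_fst d) (upd k p t))
         (fun t => coord (diag_snd d) (upd k p t)) _ _ _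
         (is_derive_coord _ k p) (is_derive_coord _ k p))) as Hinv.
    cbv beta in Hinv; rewrite upd_coord in Hinv.
    replace (_ * (_ * _)) with (- minus (kron (diag_fst d) k) (kron (diag_snd d) k)
      / (coord (diag_fst d) p - coord (diag_snd d) p) ^ 2)
      by (unfold minus, plus, opp; simpl; field; exact Hd).
    apply Hinv, Hd.
Qed.

Lemma continuous_reval e p : Omega p -> continuous (reval e) p.
Proof.
  intros Hp; induction e as [c|i|a IHa b IHb|a IHa b IHb|d]; simpl.
  - apply continuous_const.
  - apply continuous_coord.
  - apply (continuous_plus (reval a) (reval b)); auto.
  - apply (continuous_mult (reval a) (reval b)); auto.
  - apply (continuous_comp (fun p => coord (diag_fst d) p - coord (diag_snd d) p) Rinv).
    + apply (continuous_minus (coord (diag_fst d)) (coord (diag_snd d))); apply continuous_coord.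
    + apply continuous_Rinv, Omega_diag_neq, Hp.
Qed.

Lemma iterD_reval (F : pt -> R) e : (forall q, Omega q -> F q = reval e q) ->
  forall s q, Omega q -> iterD s F q = reval (fold_right rderiv e s) q.
Proof.
  intros HF s; induction s as [|i s IH]; intros q Hq; simpl; auto.
  unfold pd; rewrite (Derive_ext_loc _ (fun t => reval (fold_right rderiv e s) (upd i q t))).
  - apply is_derive_unique, is_derive_reval, Hq.
  - generalize (open_line Omega q i open_Omega Hq); apply filter_imp; auto.
Qed.

Lemma pd_reval F e k p : (forall q, Omega q -> F q = reval e q) -> Omega p ->
  pd k F p = reval (rderiv k e) p.
Proof. intros HF; exact (iterD_reval F e HF (k :: nil) p). Qed.

Lemma smooth_on_reval (F : pt -> R) e : (forall q, Omega q -> F q = reval e q) ->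
  smooth_on Omega F.
Proof.
  intros HF s p Hp; split.
  - apply (continuous_ext_loc (iterD s F) (reval (fold_right rderiv e s)) p).
    + generalize (open_Omega p Hp); apply filter_imp; intros q Hq.
      symmetry; apply iterD_reval; auto.
    + apply continuous_reval, Hp.
  - intros i; apply (ex_derive_ext_loc (fun t => reval (fold_right rderiv e s) (upd i p t))).
    + generalize (open_line Omega p i open_Omega Hp); apply filter_imp; intros t Ht.
      symmetry; apply iterD_reval; auto.
    + eexists; apply is_derive_reval, Hp.
Qed.

(** * The pencil spanned by Pf1 and Pf2 *)

Definition rsub (a b : rexpr) : rexpr := RAdd a (RMul (RCst (-1)) b).

Definition Pf1_rexpr (i j : ix) : rexpr :=
  RMul (RCst (-1 / sqrt 6 * M1 i j)) (RMul (RInvDiff D12) (RMul (RInvDiff D23) (RInvDiff D31))).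

Definition Pf2_rexpr (i j : ix) : rexpr :=
  RAdd (RMul (RCst (1 / 6 * M2 i j))
          (RAdd (RMul (rsub (RVar X1) (RVar X2)) (RMul (RInvDiff D23) (RInvDiff D31)))
                (RMul (RCst 2) (RInvDiff D12))))
       (RMul (RCst (1 / 2 * M3 i j)) (rsub (RInvDiff D23) (RInvDiff D31))).

Definition pencil (a b : R) : mxfun := fun p i j => a * Pf1 p i j + b * Pf2 p i j.

Definition pencil_rexpr (a b : R) (i j : ix) : rexpr :=
  RAdd (RMul (RCst a) (Pf1_rexpr i j)) (RMul (RCst b) (Pf2_rexpr i j)).

Lemma sqrt6_neq0 : sqrt 6 <> 0.
Proof. apply Rgt_not_eq, sqrt_lt_R0; lra. Qed.

Lemma pencil_reval a b i j q : Omega q -> pencil a b q i j = reval (pencil_rexpr a b i j) q.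
Proof.
  destruct q as [[u v] w]; intros Hq; destruct (Omega_diffs u v w Hq) as (? & ? & ? & ? & ? & ?).
  unfold pencil, Pf1, Pf2; simpl; pose proof sqrt6_neq0.
  field; auto.
Qed.

Lemma pencil_skew a b p i j : pencil a b p i j = - pencil a b p j i.
Proof. unfold pencil, Pf1, Pf2; destruct i, j; simpl; ring. Qed.

Lemma jacobi_tensor_pencil a b p i j k : Omega p -> jacobi_tensor (pencil a b) p i j k = 0.
Proof.
  intros Hp; unfold jacobi_tensor, sum3.
  rewrite !(fun l j k => pd_reval _ _ l p (pencil_reval a b j k) Hp).
  destruct p as [[u v] w]; destruct (Omega_diffs u v w Hp) as (? & ? & ? & ? & ? & ?).
  pose proof sqrt6_neq0.
  unfold pencil, Pf1, Pf2; destruct i, j, k; simpl; field; auto.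
Qed.

Lemma pencil_Poisson a b : Poisson_on Omega (pencil a b).
Proof.
  apply Poisson_on_jacobi_tensor.
  - exact open_Omega.
  - intros i j; apply (smooth_on_reval _ (pencil_rexpr a b i j)), pencil_reval.
  - intros; apply pencil_skew.
  - intros; apply jacobi_tensor_pencil; auto.
Qed.

(** * The bi-Hamiltonian structure *)

Definition Hf_rexpr : rexpr :=
  let s := RAdd (RVar X1) (rsub (RVar X2) (RMul (RCst 2) (RVar X3))) in
  let d := rsub (RVar X1) (RVar X2) in
  RMul (RMul (RCst (1 / (6 * sqrt 6))) s) (rsub (RMul s s) (RMul (RCst 9) (RMul d d))).

Lemma Hf_reval q : Hf q = reval Hf_rexpr q.
Proof. destruct q as [[u v] w]; unfold Hf; simpl; pose proof sqrt6_neq0; field; auto. Qed.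

Lemma pd_H1 k p : pd k H1 p = 1.
Proof.
  unfold pd, H1; apply is_derive_unique.
  destruct k, p as [[u v] w]; simpl; auto_derive; auto; ring.
Qed.

Lemma Pf1_grad_Hf p i : Omega p -> PgradH Pf1 Hf p i = Ufield p i.
Proof.
  intros Hp; unfold PgradH, sum3.
  rewrite !(fun l => pd_reval Hf Hf_rexpr l p (fun q _ => Hf_reval q) Hp).
  destruct p as [[u v] w]; destruct (Omega_diffs u v w Hp) as (? & ? & ? & ? & ? & ?).
  assert (Hs : sqrt 6 * sqrt 6 = 6) by (apply sqrt_sqrt; lra).
  pose proof sqrt6_neq0.
  unfold Ufield, Pf1; destruct i; simpl; field [Hs]; auto.
Qed.

Lemma Pf2_grad_H1 p i : Omega p -> PgradH Pf2 H1 p i = Ufield p i.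
Proof.
  intros Hp; unfold PgradH, sum3; rewrite !pd_H1.
  destruct p as [[u v] w]; destruct (Omega_diffs u v w Hp) as (? & ? & ? & ? & ? & ?).
  unfold Ufield, Pf2; destruct i; simpl; field; auto.
Qed.

Theorem mainTheorem5 :
  Poisson_on Omega Pf1 /\ Poisson_on Omega Pf2 /\ compatible_on Omega Pf1 Pf2 /\
  (forall p : pt, Omega p -> forall i : ix,
     Ufield p i = PgradH Pf1 Hf p i /\ Ufield p i = PgradH Pf2 H1 p i).
Proof.
  assert (Pf1_pencil : Pf1 = pencil 1 0).
  { do 3 (apply functional_extensionality; intro); unfold pencil; ring. }
  assert (Pf2_pencil : Pf2 = pencil 0 1).
  { do 3 (apply functional_extensionality; intro); unfold pencil; ring. }
  split; [|split; [|split]].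
  - rewrite Pf1_pencil; apply pencil_Poisson.
  - rewrite Pf2_pencil; apply pencil_Poisson.
  - exact pencil_Poisson.
  - intros p Hp i; rewrite Pf1_grad_Hf, Pf2_grad_H1 by exact Hp; split; reflexivity.
Qed.
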